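(* Let $\mathbf C$ be a category of coframes. The forgetful functor $|\_|:\mathbf C^{\mathrm{adh}}\to\mathbf C$ is topological: every sink $(\varphi_i:|L_i|\to L)_{i\in I}$ of $\mathbf C$-morphisms, with each $L_i$ an adherence $\mathbf C$-object, has a unique final lift, namely $(L,\nu_L)$ where $$\nu_L(\ell)=\bigwedge_{\substack{n\in\mathbb N,\ a_1,\dots,a_n\in\mathcal C_L\\ \ell\le\bigvee_{j=1}^n a_j}}\ \bigvee_{j=1}^n\ \bigwedge_{i\in I}\varphi_i\big(\nu_{L_i}(\varphi_{i!}(a_j))\big).$$
   Context: A category of coframes has coframes as objects and coframe morphisms (preserving arbitrary infima and finite suprema); each coframe morphism $\varphi$ has a left adjoint $\varphi_!$. $\mathcal C_L$ is the set of complemented elements of $L$. An adherence structure on $L$ is a monotone $\nu:L\to L$ preserving finite suprema of complemented elements with $\nu(\ell)=\bigwedge\{\nu(a):a\in\mathcal C_L,a\ge\ell\}$. An adherence $\mathbf C$-object is $(L,\nu_L)$ with $\nu_L$ an adherence structure; $\mathbf C^{\mathrm{adh}}$ has as morphisms the $\mathbf C$-morphisms $\varphi:L\to L'$ that are continuous: $\nu_{L'}(\ell')\le\varphi(\nu_L(\varphi_!(\ell')))$ for all $\ell'\in L'$. $|\_|$ sends $(L,\nu_L)$ to $L$. A lift of the sink is an adherence structure on $L$ making every $\varphi_i$ continuous; it is final if for every $\mathbf C$-morphism $\psi:L\to|L'|$ with $L'$ an adherence $\mathbf C$-object, $\psi$ is continuous iff every $\psi\circ\varphi_i$ is continuous.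 *)

From Stdlib Require Import List.
Import ListNotations.

(* A coframe: a complete lattice (arbitrary infima and suprema of Prop-valued
   subsets) in which binary joins distribute over arbitrary meets:
   a \/ /\S = /\ { a \/ s | s in S }. *)
Record coframe := Coframe {
  carrier :> Type;
  cle : carrier -> carrier -> Prop;
  cle_refl : forall x, cle x x;
  cle_trans : forall x y z, cle x y -> cle y z -> cle x z;
  cle_antisym : forall x y, cle x y -> cle y x -> x = y;
  cinf : (carrier -> Prop) -> carrier;
  csup : (carrier -> Prop) -> carrier;
  cinf_lb : forall (S : carrier -> Prop) x, S x -> cle (cinf S) x;
  cinf_glb : forall (S : carrier -> Prop) y, (forall x, S x -> cle y x) -> cle y (cinf S);
  csup_ub : forall (S : carrier -> Prop) x, S x -> cle x (csup S);
  csup_lub : forall (S : carrier -> Prop) y, (forall x, S x -> cle x y) -> cle (csup S) y;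
  codistr : forall (a : carrier) (S : carrier -> Prop),
    csup (fun x => x = a \/ x = cinf S)
    = cinf (fun y => exists s, S s /\ y = csup (fun x => x = a \/ x = s))
}.
Arguments cle {c}.
Arguments cinf {c}.
Arguments csup {c}.

Definition cbot {L : coframe} : L := csup (fun _ => False).
Definition ctop {L : coframe} : L := cinf (fun _ => False).
Definition cjoin {L : coframe} (a b : L) : L := csup (fun x => x = a \/ x = b).
Definition cmeet {L : coframe} (a b : L) : L := cinf (fun x => x = a \/ x = b).
Definition cjoinl {L : coframe} (s : list L) : L := fold_right cjoin cbot s.

Definition cimg {A B : Type} (f : A -> B) (S : A -> Prop) : B -> Prop :=
  fun y => exists x, S x /\ y = f x.

Definition coframe_morphism {L L' : coframe} (f : L -> L') : Prop :=
  (forall S : L -> Prop, f (cinf S) = cinf (cimg f S)) /\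
  f cbot = cbot /\
  (forall a b : L, f (cjoin a b) = cjoin (f a) (f b)).

(* The left adjoint phi_! of an infima-preserving map phi. *)
Definition ladj {L L' : coframe} (f : L -> L') (l' : L') : L :=
  cinf (fun l => cle l' (f l)).

Definition complemented {L : coframe} (a : L) : Prop :=
  exists b : L, cmeet a b = cbot /\ cjoin a b = ctop.

Definition adherence {L : coframe} (nu : L -> L) : Prop :=
  (forall x y : L, cle x y -> cle (nu x) (nu y)) /\
  (forall s : list L, Forall complemented s -> nu (cjoinl s) = cjoinl (map nu s)) /\
  (forall l : L, nu l = cinf (fun y => exists a, complemented a /\ cle l a /\ y = nu a)).

Definition continuous {L L' : coframe} (nuL : L -> L) (nuL' : L' -> L') (f : L -> L') : Prop :=
  forall l' : L', cle (nuL' l') (f (nuL (ladj f l'))).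

Record coframe_category := CoframeCategory {
  cobj : coframe -> Prop;
  chom : forall L L' : coframe, (L -> L') -> Prop;
  chom_morph : forall (L L' : coframe) (f : L -> L'),
    cobj L -> cobj L' -> chom L L' f -> coframe_morphism f;
  chom_id : forall L : coframe, cobj L -> chom L L (fun x => x);
  chom_comp : forall (L1 L2 L3 : coframe) (f : L1 -> L2) (g : L2 -> L3),
    cobj L1 -> cobj L2 -> cobj L3 -> chom L1 L2 f -> chom L2 L3 g ->
    chom L1 L3 (fun x => g (f x))
}.

Definition final_lift (C : coframe_category) {I : Type} (Li : I -> coframe)
  (nui : forall i, Li i -> Li i) (L : coframe) (phi : forall i, Li i -> L)
  (nu : L -> L) : Prop :=
  adherence nu /\
  (forall i, continuous (nui i) nu (phi i)) /\
  (forall (L' : coframe) (nu' : L' -> L') (psi : L -> L'),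
     cobj C L' -> adherence nu' -> chom C L L' psi ->
     (continuous nu nu' psi <-> forall i, continuous (nui i) nu' (fun x => psi (phi i x)))).

Definition final_adherence {I : Type} (Li : I -> coframe)
  (nui : forall i, Li i -> Li i) (L : coframe) (phi : forall i, Li i -> L)
  (l : L) : L :=
  let g (a : L) : L := cinf (fun y => exists i, y = phi i (nui i (ladj (phi i) a))) in
  cinf (fun y => exists s : list L,
          Forall complemented s /\ cle l (cjoinl s) /\ y = cjoinl (map g s)).

(* The value of an adherence structure at l is determined by its values at
   complemented covers of l, and on complemented elements it preserves finite
   joins. Continuity of phi_i at a complemented a says nu_L(a) is below
   phi_i(nu_i(phi_i!(a))), so the meet g(a) of these bounds is the largest value
   nu_L(a) may take, and the formula is the largest adherence structure making
   every phi_i continuous. Finality follows: if every psi o phi_i is continuous,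
   then nu'(psi a) <= psi(g a) for complemented a, and since psi preserves
   meets, finite joins and complemented elements, psi is continuous.
   Uniqueness holds for any two final lifts, by testing finality of each one
   against the identity morphism into the other. *)
From Stdlib Require Import List FunctionalExtensionality.
Import ListNotations.

Arguments cle_refl {c} x.
Arguments cle_trans {c} x y z.
Arguments cle_antisym {c} x y.

Section CoframeLattice.
Variable L : coframe.
Implicit Types (a b c x y z : L) (S T : L -> Prop) (s u v : list L).

Lemma join_l a b : cle a (cjoin a b).
Proof. apply csup_ub; left; reflexivity. Qed.

Lemma join_r a b : cle b (cjoin a b).
Proof. apply csup_ub; right; reflexivity. Qed.

Lemma join_lub a b c : cle a c -> cle b c -> cle (cjoin a b) c.
Proof. intros Hac Hbc; apply csup_lub; intros x [-> | ->]; assumption. Qed.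

Lemma meet_l a b : cle (cmeet a b) a.
Proof. apply cinf_lb; left; reflexivity. Qed.

Lemma meet_r a b : cle (cmeet a b) b.
Proof. apply cinf_lb; right; reflexivity. Qed.

Lemma meet_glb a b c : cle c a -> cle c b -> cle c (cmeet a b).
Proof. intros Hca Hcb; apply cinf_glb; intros x [-> | ->]; assumption. Qed.

Lemma bot_le x : cle cbot x.
Proof. apply csup_lub; intros _ []. Qed.

Lemma le_top x : cle x ctop.
Proof. apply cinf_glb; intros _ []. Qed.

Lemma join_mono a a' b b' : cle a a' -> cle b b' -> cle (cjoin a b) (cjoin a' b').
Proof.
  intros Ha Hb; apply join_lub.
  - eapply cle_trans; [exact Ha | apply join_l].
  - eapply cle_trans; [exact Hb | apply join_r].
Qed.

Lemma join_comm_le a b : cle (cjoin a b) (cjoin b a).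
Proof. apply join_lub; [apply join_r | apply join_l]. Qed.

Lemma le_join_cinf z a S :
  (forall x, S x -> cle z (cjoin a x)) -> cle z (cjoin a (cinf S)).
Proof.
  intros H; unfold cjoin; rewrite codistr.
  apply cinf_glb; intros y [x [Sx ->]]; exact (H x Sx).
Qed.

Lemma le_join_cinf2 z S T :
  (forall x y, S x -> T y -> cle z (cjoin x y)) -> cle z (cjoin (cinf S) (cinf T)).
Proof.
  intros H; apply le_join_cinf; intros y Ty.
  eapply cle_trans; [| apply join_comm_le].
  apply le_join_cinf; intros x Sx.
  eapply cle_trans; [exact (H x y Sx Ty) | apply join_comm_le].
Qed.

Lemma meet_join_distr_le a b c :
  cle (cmeet (cjoin a b) (cjoin a c)) (cjoin a (cmeet b c)).
Proof. apply le_join_cinf; intros x [-> | ->]; [apply meet_l | apply meet_r]. Qed.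

Lemma meet_distr_le a b c :
  cle (cmeet a (cjoin b c)) (cjoin (cmeet a b) (cmeet a c)).
Proof.
  eapply cle_trans; [| apply meet_join_distr_le]. apply meet_glb.
  - eapply cle_trans; [apply meet_l | apply join_r].
  - eapply cle_trans; [| apply join_comm_le].
    eapply cle_trans; [| apply meet_join_distr_le]. apply meet_glb.
    + eapply cle_trans; [apply meet_l | apply join_r].
    + eapply cle_trans; [apply meet_r | apply join_comm_le].
Qed.

Lemma complemented_bot : complemented (@cbot L).
Proof.
  exists ctop; split; apply cle_antisym;
    solve [apply meet_l | apply bot_le | apply le_top | apply join_r].
Qed.

Lemma complemented_join a b :
  complemented a -> complemented b -> complemented (cjoin a b).
Proof.
  intros [a' [Ha0 Ha1]] [b' [Hb0 Hb1]]; exists (cmeet a' b').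
  split; apply cle_antisym; try apply bot_le; try apply le_top.
  - eapply cle_trans; [apply meet_glb; [apply meet_r | apply meet_l] |].
    eapply cle_trans; [apply meet_distr_le |]. apply join_lub.
    + rewrite <- Ha0. apply meet_glb; [apply meet_r |].
      eapply cle_trans; [apply meet_l | apply meet_l].
    + rewrite <- Hb0. apply meet_glb; [apply meet_r |].
      eapply cle_trans; [apply meet_l | apply meet_r].
  - eapply cle_trans; [| apply meet_join_distr_le]. apply meet_glb.
    + rewrite <- Ha1. apply join_mono; [apply join_l | apply cle_refl].
    + rewrite <- Hb1. apply join_mono; [apply join_r | apply cle_refl].
Qed.

Lemma complemented_cjoinl s : Forall complemented s -> complemented (cjoinl s).
Proof.
  induction 1; [apply complemented_bot | apply complemented_join; assumption].
Qed.

Lemma cjoinl_ub s x : In x s -> cle x (cjoinl s).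
Proof.
  induction s as [| a s IH]; [intros [] |].
  intros [-> | Hx]; [apply join_l |].
  eapply cle_trans; [exact (IH Hx) | apply join_r].
Qed.

Lemma cjoinl_lub s c : (forall x, In x s -> cle x c) -> cle (cjoinl s) c.
Proof.
  induction s as [| a s IH]; intros H; [apply bot_le |].
  apply join_lub; [apply H; left; reflexivity |].
  apply IH; intros x Hx; apply H; right; exact Hx.
Qed.

Lemma cjoinl1 a : cjoinl [a] = a.
Proof.
  apply cle_antisym; [apply join_lub; [apply cle_refl | apply bot_le] | apply join_l].
Qed.

Lemma cjoinl_app u v : cjoinl (u ++ v) = cjoin (cjoinl u) (cjoinl v).
Proof.
  apply cle_antisym.
  - apply cjoinl_lub; intros x Hx; apply in_app_or in Hx as [Hx | Hx].
    + eapply cle_trans; [apply cjoinl_ub, Hx | apply join_l].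
    + eapply cle_trans; [apply cjoinl_ub, Hx | apply join_r].
  - apply join_lub; apply cjoinl_lub; intros x Hx;
      apply cjoinl_ub, in_or_app; auto.
Qed.

Lemma cjoinl_map_mono {A : Type} (F G : A -> L) (r : list A) :
  (forall t, In t r -> cle (F t) (G t)) ->
  cle (cjoinl (map F r)) (cjoinl (map G r)).
Proof.
  intros H; apply cjoinl_lub; intros x Hx.
  apply in_map_iff in Hx as [t [<- Ht]].
  eapply cle_trans; [exact (H t Ht) | apply cjoinl_ub, in_map, Ht].
Qed.

End CoframeLattice.

Section CoframeMorphism.
Variables L L' : coframe.
Variable f : L -> L'.
Hypothesis Hf : coframe_morphism f.

Lemma mor_le_cinf S y : (forall x, S x -> cle y (f x)) -> cle y (f (cinf S)).
Proof.
  intros H; rewrite (proj1 Hf); apply cinf_glb; intros z [x [Sx ->]]; exact (H x Sx).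
Qed.

Lemma mor_mono x y : cle x y -> cle (f x) (f y).
Proof.
  intros Hxy.
  replace x with (cmeet x y) by (apply cle_antisym;
    [apply meet_l | apply meet_glb; [apply cle_refl | exact Hxy]]).
  unfold cmeet; rewrite (proj1 Hf); apply cinf_lb; exists y; split; [right |]; reflexivity.
Qed.

Lemma mor_cjoinl s : f (cjoinl s) = cjoinl (map f s).
Proof.
  destruct Hf as [_ [Hbot Hjoin]].
  induction s as [| a s IH]; simpl; [exact Hbot | rewrite Hjoin, IH; reflexivity].
Qed.

Lemma mor_top : f ctop = ctop.
Proof. apply cle_antisym; [apply le_top | apply mor_le_cinf; intros _ []]. Qed.

Lemma mor_complemented a : complemented a -> complemented (f a).
Proof.
  destruct Hf as [_ [Hbot Hjoin]].
  intros [b [Hab0 Hab1]]; exists (f b).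
  split; apply cle_antisym; try apply bot_le; try apply le_top.
  - rewrite <- Hbot, <- Hab0. apply mor_le_cinf; intros x [-> | ->];
      [apply meet_l | apply meet_r].
  - rewrite <- Hjoin, Hab1, mor_top. apply cle_refl.
Qed.

Lemma le_ladj_unit y : cle y (f (ladj f y)).
Proof. apply mor_le_cinf; intros x Hx; exact Hx. Qed.

End CoframeMorphism.

Arguments mor_le_cinf {L L' f} Hf S y.
Arguments mor_mono {L L' f} Hf x y.
Arguments mor_cjoinl {L L' f} Hf s.
Arguments mor_complemented {L L' f} Hf a.
Arguments le_ladj_unit {L L' f} Hf y.

Lemma ladj_le {L L' : coframe} (f : L -> L') (y : L') (x : L) :
  cle y (f x) -> cle (ladj f y) x.
Proof. intros Hyx; unfold ladj; apply cinf_lb, Hyx. Qed.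

Lemma ladj_id_le {L : coframe} (x : L) : cle (ladj (fun y => y) x) x.
Proof. apply ladj_le, cle_refl. Qed.

Lemma ladj_comp_le {L1 L2 L3 : coframe} (f : L1 -> L2) (g : L2 -> L3) (z : L3) :
  cle (ladj f (ladj g z)) (ladj (fun x => g (f x)) z).
Proof. apply cinf_glb; intros x Hx; apply ladj_le, ladj_le, Hx. Qed.

Lemma ladj_comp_image_le {L1 L2 L3 : coframe} (f : L1 -> L2) (g : L2 -> L3)
  (y : L2) : coframe_morphism g ->
  cle (ladj (fun x => g (f x)) (g y)) (ladj f y).
Proof. intros Hg; apply cinf_glb; intros x Hx; apply ladj_le, (mor_mono Hg), Hx. Qed.

Lemma adherence_mono {L : coframe} (nu : L -> L) (x y : L) :
  adherence nu -> cle x y -> cle (nu x) (nu y).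
Proof. intros [Hmono _]; apply Hmono. Qed.

Lemma continuous_comp {L1 L2 L3 : coframe} (nu1 : L1 -> L1) (nu2 : L2 -> L2)
  (nu3 : L3 -> L3) (f : L1 -> L2) (g : L2 -> L3) :
  adherence nu1 -> coframe_morphism f -> coframe_morphism g ->
  continuous nu1 nu2 f -> continuous nu2 nu3 g ->
  continuous nu1 nu3 (fun x => g (f x)).
Proof.
  intros Hnu1 Hf Hg Hcf Hcg z.
  eapply cle_trans; [apply Hcg |]. apply (mor_mono Hg).
  eapply cle_trans; [apply Hcf |]. apply (mor_mono Hf).
  apply (adherence_mono _ _ _ Hnu1), ladj_comp_le.
Qed.

Lemma continuous_id_le {L : coframe} (nu nu' : L -> L) (x : L) :
  adherence nu -> continuous nu nu' (fun y => y) -> cle (nu' x) (nu x).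
Proof.
  intros Hnu Hc; eapply cle_trans; [apply Hc |].
  apply (adherence_mono _ _ _ Hnu), ladj_id_le.
Qed.

Lemma final_lift_unique (C : coframe_category) {I : Type} (Li : I -> coframe)
  (nui : forall i, Li i -> Li i) (L : coframe) (phi : forall i, Li i -> L)
  (nu1 nu2 : L -> L) : cobj C L ->
  final_lift C Li nui L phi nu1 -> final_lift C Li nui L phi nu2 -> nu1 = nu2.
Proof.
  intros HL Hfin1 Hfin2.
  assert (Hid_le : forall nu nu', final_lift C Li nui L phi nu ->
            final_lift C Li nui L phi nu' -> forall x, cle (nu' x) (nu x)).
  { intros nu nu' [Hnu [_ Hfin]] [Hnu' [Hcont' _]] x.
    apply continuous_id_le; [exact Hnu |].
    exact (proj2 (Hfin L nu' _ HL Hnu' (chom_id C L HL)) Hcont'). }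
  extensionality x; apply cle_antisym; apply Hid_le; assumption.
Qed.

Section FinalAdherence.
Variables (I : Type) (Li : I -> coframe) (nui : forall i, Li i -> Li i).
Variables (L : coframe) (phi : forall i, Li i -> L).
Hypothesis Hadh : forall i, adherence (nui i).
Hypothesis Hphi : forall i, coframe_morphism (phi i).

Local Notation nuF := (final_adherence Li nui L phi).

Definition sink_bound (a : L) : L :=
  cinf (fun y => exists i, y = phi i (nui i (ladj (phi i) a))).

Lemma final_adherenceE (x : L) :
  nuF x = cinf (fun y => exists s, Forall complemented s /\ cle x (cjoinl s) /\
                                   y = cjoinl (map sink_bound s)).
Proof. reflexivity. Qed.

Lemma final_adherence_le_cover (x : L) (s : list L) :
  Forall complemented s -> cle x (cjoinl s) -> cle (nuF x) (cjoinl (map sink_bound s)).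
Proof. intros Hs Hxs; rewrite final_adherenceE; apply cinf_lb; exists s; auto. Qed.

Lemma le_final_adherence (x y : L) :
  (forall s, Forall complemented s -> cle x (cjoinl s) ->
     cle y (cjoinl (map sink_bound s))) -> cle y (nuF x).
Proof.
  intros H; rewrite final_adherenceE.
  apply cinf_glb; intros z [s [Hs [Hxs ->]]]; exact (H s Hs Hxs).
Qed.

Lemma final_adherence_mono (x y : L) : cle x y -> cle (nuF x) (nuF y).
Proof.
  intros Hxy; apply le_final_adherence; intros s Hs Hys.
  apply final_adherence_le_cover; [exact Hs | eapply cle_trans; eassumption].
Qed.

Lemma final_adherence_le_bound (x a : L) :
  complemented a -> cle x a -> cle (nuF x) (sink_bound a).
Proof.
  intros Ha Hxa; rewrite <- (cjoinl1 _ (sink_bound a)).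
  apply (final_adherence_le_cover x [a]); [constructor; auto | rewrite cjoinl1; exact Hxa].
Qed.

Lemma final_adherence_bot : nuF cbot = cbot.
Proof.
  apply cle_antisym; [| apply bot_le].
  apply (final_adherence_le_cover _ []); [constructor | apply cle_refl].
Qed.

(* Covers of x and of y concatenate to a cover of their join. *)
Lemma final_adherence_join (x y : L) : nuF (cjoin x y) = cjoin (nuF x) (nuF y).
Proof.
  apply cle_antisym.
  - rewrite (final_adherenceE x), (final_adherenceE y).
    apply le_join_cinf2; intros u v [s [Hs [Hxs ->]]] [t [Ht [Hyt ->]]].
    rewrite <- !cjoinl_app, <- map_app.
    apply final_adherence_le_cover; [apply Forall_app; auto |].
    rewrite cjoinl_app; apply join_mono; assumption.
  - apply join_lub; apply final_adherence_mono; [apply join_l | apply join_r].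
Qed.

Lemma final_adherence_cjoinl (s : list L) : nuF (cjoinl s) = cjoinl (map nuF s).
Proof.
  induction s as [| a s IH]; simpl;
    [exact final_adherence_bot | rewrite final_adherence_join, IH; reflexivity].
Qed.

Lemma adherence_final_adherence : adherence nuF.
Proof.
  split; [exact final_adherence_mono |].
  split; [intros s _; apply final_adherence_cjoinl |].
  intros x; apply cle_antisym.
  - apply cinf_glb; intros y [a [_ [Hxa ->]]]; apply final_adherence_mono, Hxa.
  - apply le_final_adherence; intros s Hs Hxs.
    eapply cle_trans.
    + apply cinf_lb; exists (cjoinl s); split; [apply complemented_cjoinl, Hs |].
      split; [exact Hxs | reflexivity].
    + apply final_adherence_le_cover; [exact Hs | apply cle_refl].
Qed.

Lemma sink_bound_le (i : I) (a : L) :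
  cle (sink_bound a) (phi i (nui i (ladj (phi i) a))).
Proof. apply cinf_lb; exists i; reflexivity. Qed.

(* nu_i(phi_i!(x)) is the meet of nu_i(c) over complemented c >= phi_i!(x),
   and each phi_i(c) is a complemented element above x. *)
Lemma continuous_sink (i : I) : continuous (nui i) nuF (phi i).
Proof.
  intros x; destruct (Hadh i) as [Hmono [_ Happrox]].
  rewrite (Happrox (ladj (phi i) x)).
  apply (mor_le_cinf (Hphi i)); intros y [c [Hc [Hxc ->]]].
  eapply cle_trans; [apply (final_adherence_le_bound x (phi i c)) |].
  - apply (mor_complemented (Hphi i)), Hc.
  - eapply cle_trans; [apply (le_ladj_unit (Hphi i)) | apply (mor_mono (Hphi i)), Hxc].
  - eapply cle_trans; [apply sink_bound_le |].
    apply (mor_mono (Hphi i)), Hmono, ladj_le, cle_refl.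
Qed.

Lemma continuous_of_sink_continuous (L' : coframe) (nu' : L' -> L') (psi : L -> L') :
  adherence nu' -> coframe_morphism psi ->
  (forall i, continuous (nui i) nu' (fun x => psi (phi i x))) ->
  continuous nuF nu' psi.
Proof.
  intros [Hmono' [Hjoin' _]] Hpsi Hc z.
  assert (Hbound : forall a, cle (nu' (psi a)) (psi (sink_bound a))).
  { intros a; apply (mor_le_cinf Hpsi); intros y [i ->].
    eapply cle_trans; [apply Hc |].
    apply (mor_mono Hpsi), (mor_mono (Hphi i)), (adherence_mono _ _ _ (Hadh i)).
    apply ladj_comp_image_le, Hpsi. }
  rewrite final_adherenceE; apply (mor_le_cinf Hpsi); intros y [s [Hs [Hcov ->]]].
  eapply cle_trans; [apply (Hmono' z (psi (cjoinl s))) |].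
  { eapply cle_trans; [apply (le_ladj_unit Hpsi) | apply (mor_mono Hpsi), Hcov]. }
  rewrite !(mor_cjoinl Hpsi), Hjoin', !map_map.
  - apply cjoinl_map_mono; intros a _; apply Hbound.
  - apply Forall_map; eapply Forall_impl; [apply (mor_complemented Hpsi) | exact Hs].
Qed.

Lemma final_lift_final_adherence (C : coframe_category) :
  cobj C L -> final_lift C Li nui L phi nuF.
Proof.
  intros HL; split; [exact adherence_final_adherence |].
  split; [exact continuous_sink |].
  intros L' nu' psi HL' Hnu' Hpsi_hom.
  assert (Hpsi : coframe_morphism psi) by exact (chom_morph C L L' psi HL HL' Hpsi_hom).
  split.
  - intros Hcont i; apply continuous_comp with (nu2 := nuF);
      auto using continuous_sink.
  - apply continuous_of_sink_continuous; assumption.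
Qed.

End FinalAdherence.

Theorem mainTheorem12 (C : coframe_category) (I : Type) (Li : I -> coframe)
  (nui : forall i, Li i -> Li i) (L : coframe) (phi : forall i, Li i -> L) :
  cobj C L ->
  (forall i, cobj C (Li i)) ->
  (forall i, adherence (nui i)) ->
  (forall i, chom C (Li i) L (phi i)) ->
  final_lift C Li nui L phi (final_adherence Li nui L phi) /\
  (forall nu : L -> L, final_lift C Li nui L phi nu ->
     nu = final_adherence Li nui L phi).
Proof.
  intros HL HLi Hadh Hhom.
  assert (Hphi : forall i, coframe_morphism (phi i)).
  { intros i; exact (chom_morph C _ _ (phi i) (HLi i) HL (Hhom i)). }
  assert (Hfinal := final_lift_final_adherence I Li nui L phi Hadh Hphi C HL).
  split; [exact Hfinal |].
  intros nu Hnu; exact (final_lift_unique C Li nui L phi nu _ HL Hnu Hfinal).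
Qed.
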